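(* For $n\ge 0$, let $T_n$ be the poset consisting of a chain $a_1<a_2<\dots<a_n$, two incomparable elements $b,c$ with $a_n<b$ and $a_n<c$, and a chain $e_1<\dots<e_n$ with $b<e_1$ and $c<e_1$ (when $n=0$, $T_0$ is a two-element antichain), and let $R_n=J(T_n)$ be its lattice of order ideals (a lattice with $2n+4$ elements, the minuscule ''double tailed diamond'' lattice). Then \[ \d(R_n)=\frac{2}{3}(n+3)\left(4n^2+9n+8\right). \]
   Context: $J(P)$ is the lattice of order ideals of a finite poset $P$ ordered by inclusion. For a finite poset $Q$, $\d(Q)=\sum_{(p,q)\in Q\times Q}\d(p,q)$, where $\d(p,q)$ is the graph distance in the Hasse diagram of $Q$ (edges = cover relations) and the sum runs over ordered pairs. *)

From mathcomp Require Import all_boot all_order all_algebra.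
Set Implicit Arguments. Unset Strict Implicit. Unset Printing Implicit Defensive.

Section GraphDist.
Variables (V : finType) (adj : rel V).

Fixpoint ball (k : nat) (u : V) : {set V} :=
  if k is k'.+1 then
    ball k' u :|: [set y | [exists x in ball k' u, adj x y]]
  else [set u].

(* graph distance: least k such that v is within k steps of u
   (meaningful for connected graphs, where it is < #|V|) *)
Definition gdist (u v : V) : nat := find (fun k => v \in ball k u) (iota 0 #|V|).

Definition dsum : nat := \sum_(p : V) \sum_(q : V) gdist p q.
End GraphDist.

Section Ideals.
Variables (T : finType) (le : rel T).

Definition is_ideal (I : {set T}) : bool :=
  [forall x, forall y, (y \in I) && le x y ==> (x \in I)].

Definition J := {I : {set T} | is_ideal I}.

Definition Jcover (I K : J) : bool :=
  (val I \proper val K) &&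
  ~~ [exists L : J, (val I \proper val L) && (val L \proper val K)].

Definition Jhasse : rel J := fun I K => Jcover I K || Jcover K I.

Definition dJ : nat := dsum Jhasse.
End Ideals.

(* Elements of T_n are 'I_(2n+2): i < n is a_(i+1); n is b; n+1 is c;
   n+2+j (j < n) is e_(j+1). *)
Definition Tn_rank (n : nat) (x : 'I_(2 * n + 2)) : nat :=
  if x < n then x : nat
  else if x <= n.+1 then n
  else x.-1.

Definition Tn_le (n : nat) : rel 'I_(2 * n + 2) :=
  fun x y => (x == y) || (Tn_rank x < Tn_rank y).

Definition dRn (n : nat) : nat := dJ (@Tn_le n).

From mathcomp Require Import all_boot all_order all_algebra zify ring.
Set Implicit Arguments. Unset Strict Implicit.

(* 1. For any finite poset P (here: a relation with a strictly monotone rank,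
      which provides minimal and maximal elements), the graph distance
      between two ideals I, K in the Hasse diagram of J(P) equals the size
      sdist I K of their symmetric difference: covers add one element, and
      an ideal can always be enlarged (by a minimal element of K \ I) or
      shrunk (by a maximal element of I \ K) one step towards K.  Hence
      d(J(P)) is the sum of sdist over all pairs of ideals (dJ_sdist).
   2. Labelling T_n as 0 < ... < 2n+1 with b = n, c = n+1, its ideals are
      the 2n+3 initial segments {0, ..., k-1} and Qc = {a_1, ..., a_n, c}
      (Tn_ideals).  Segments are at distance |k - l|, and Qc is at distance
      |k - (n+1)| from the segment of size k, plus 2 when k = n+1.
   3. Summing these distances over 'I_(2n+4) (dRn_sum) with the closed forms
      for sums of |i - j| gives 3 d(R_n) = 2 (n+3) (4n^2 + 9n + 8). *)

Section SymmetricDifference.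
Variable T : finType.
Implicit Types A B C : {set T}.

Definition sdist A B : nat := #|A :\: B| + #|B :\: A|.

Lemma sdistC A B : sdist A B = sdist B A.
Proof. by rewrite /sdist addnC. Qed.

Lemma sdistxx A : sdist A A = 0.
Proof. by rewrite /sdist setDv cards0. Qed.

Lemma sdist_eq0 A B : sdist A B = 0 -> A = B.
Proof.
move=> /eqP; rewrite addn_eq0 !cards_eq0 !setD_eq0 => /andP [HAB HBA].
by apply/eqP; rewrite eqEsubset HAB HBA.
Qed.

Lemma sdist_triangle A B C : sdist A C <= sdist A B + sdist B C.
Proof.
have sub_setD (X Y Z : {set T}) : #|X :\: Z| <= #|X :\: Y| + #|Y :\: Z|.
  apply: leq_trans (leq_card_setU _ _) ; apply: subset_leq_card.
  by apply/subsetP => x; rewrite !inE; case: (x \in X); case: (x \in Y); case: (x \in Z).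
by rewrite /sdist; have := sub_setD A B C; have := sub_setD C B A; lia.
Qed.

Lemma sdist_sub A B : A \subset B -> sdist A B = #|B| - #|A|.
Proof.
move=> HAB; move: (HAB); rewrite -setD_eq0 /sdist => /eqP ->.
by rewrite cards0 cardsD (setIidPr HAB).
Qed.

Lemma sdist_UI A B : sdist A B = #|A :|: B| - #|A :&: B|.
Proof.
have := cardsUI A B; have := subset_leq_card (subsetIl A B).
have := subset_leq_card (subsetIr A B).
by rewrite /sdist !cardsD (setIC B); lia.
Qed.

Lemma sdist_add1 A B y : y \in B :\: A -> sdist (y |: A) B = (sdist A B).-1.
Proof.
rewrite inE /sdist => /andP [HyA HyB].
have -> : (y |: A) :\: B = A :\: B.
  by apply/setP => z; rewrite !inE; case: eqP => // ->; rewrite HyB.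
have -> : B :\: (y |: A) = (B :\: A) :\ y.
  by apply/setP => z; rewrite !inE negb_or andbA.
by rewrite (cardsD1 y (B :\: A)) !inE HyA HyB; lia.
Qed.

Lemma sdist_del1 A B y : y \in A :\: B -> sdist (A :\ y) B = (sdist A B).-1.
Proof.
rewrite inE /sdist => /andP [HyB HyA].
have -> : (A :\ y) :\: B = (A :\: B) :\ y by apply/setP => z; rewrite !inE andbCA.
have -> : B :\: (A :\ y) = B :\: A.
  by apply/setP => z; rewrite !inE; case: (eqVneq z y) => [-> | _]; rewrite ?(negbTE HyB) ?andbF.
by rewrite (cardsD1 y (A :\: B)) !inE HyA HyB; lia.
Qed.
End SymmetricDifference.

Lemma find_iota_leq d N : d < N -> find (fun k => d <= k) (iota 0 N) = d.
Proof.
move=> HdN; rewrite -(subnKC (ltnW HdN)) iotaD find_cat size_iota add0n.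
have -> : has (fun k => d <= k) (iota 0 d) = false.
  by apply/negbTE/hasPn => k; rewrite mem_iota; lia.
by rewrite -(prednK (_ : 0 < N - d)) ?subn_gt0 /= ?leqnn ?addn0.
Qed.

Section IdealDistance.
Variables (T : finType) (le : rel T) (rank : T -> nat).
Hypothesis rank_mono : forall x y, le x y -> x != y -> rank x < rank y.

Lemma idealP (I : {set T}) :
  reflect (forall x y, y \in I -> le x y -> x \in I) (is_ideal le I).
Proof.
apply: (iffP forallP) => [H x y Hy Hxy | H x].
  by have /forallP/(_ y) := H x; rewrite Hy Hxy.
by apply/forallP => y; apply/implyP => /andP [Hy Hxy]; apply: H Hxy.
Qed.

Lemma exists_minimal (S : {set T}) : S != set0 ->
  exists2 y, y \in S & forall w, w \in S -> le w y -> w = y.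
Proof.
case/set0Pn => y0 Hy0; case: (arg_minnP rank Hy0) => y Hy Hmin.
exists y => // w Hw Hwy; apply/eqP; apply: contraT => Hne.
by have := rank_mono Hwy Hne; have := Hmin w Hw; lia.
Qed.

Lemma exists_maximal (S : {set T}) : S != set0 ->
  exists2 y, y \in S & forall w, w \in S -> le y w -> w = y.
Proof.
case/set0Pn => y0 Hy0; case: (arg_maxnP rank Hy0) => y Hy Hmax.
exists y => // w Hw Hyw; apply/eqP; apply: contraT => Hne.
by have := rank_mono Hyw; rewrite eq_sym Hne => /(_ isT); have := Hmax w Hw; lia.
Qed.

(* An ideal I can be enlarged by one element towards any other ideal K:
   a minimal element of K :\: I has all its predecessors in I. *)
Lemma ideal_addP {I K : {set T}} : is_ideal le I -> is_ideal le K ->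
  K :\: I != set0 -> exists2 y, y \in K :\: I & is_ideal le (y |: I).
Proof.
move=> /idealP HI /idealP HK /exists_minimal [y Hy Hmin]; exists y => //.
move: Hy; rewrite inE => /andP [HyI HyK].
apply/idealP => x z; rewrite !inE => /orP [/eqP -> Hxy | Hz Hxz]; last first.
  by rewrite (HI x z Hz Hxz) orbT.
case HxI: (x \in I); first by rewrite orbT.
by rewrite (Hmin x) ?eqxx // inE HxI (HK x y HyK Hxy).
Qed.

(* Dually, I can be shrunk by one element towards K: a maximal element of
   I :\: K has no successor left in I. *)
Lemma ideal_delP {I K : {set T}} : is_ideal le I -> is_ideal le K ->
  I :\: K != set0 -> exists2 y, y \in I :\: K & is_ideal le (I :\ y).
Proof.
move=> /idealP HI /idealP HK /exists_maximal [y Hy Hmax]; exists y => //.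
move: Hy; rewrite inE => /andP [HyK HyI].
apply/idealP => x z; rewrite !inE => /andP [Hzy Hz] Hxz.
rewrite (HI x z Hz Hxz) andbT; apply: contraNneq Hzy => Exy; subst x.
have HzK : z \notin K by apply: contra HyK => HzK; apply: HK Hxz.
by apply/eqP; apply: Hmax => //; rewrite inE HzK.
Qed.

Lemma ideal_inj (I K : J le) : sval I = sval K -> I = K.
Proof. exact: val_inj. Qed.

Lemma Jcover_card (I K : J le) :
  Jcover I K = (sval I \subset sval K) && (#|sval K| == (#|sval I|).+1).
Proof.
apply/idP/idP => [/andP [HIK Hno] | /andP [HIK /eqP HK]]; last first.
  rewrite /Jcover properEcard HIK HK ltnSn /=.
  by apply/existsP => -[L /andP [/proper_card H1 /proper_card H2]]; lia.
have HIK' := proper_sub HIK; rewrite HIK' eqn_leq (proper_card HIK) andbT.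
apply: contraR Hno; rewrite -ltnNge => Hgap.
have [|y Hy HL] := ideal_addP (svalP I) (svalP K).
  by case/andP: HIK => _; rewrite setD_eq0.
move: Hy; rewrite inE => /andP [HyI HyK].
apply/existsP; exists (Sub (y |: sval I) HL); rewrite !properEcard /=.
rewrite subsetUr subUset sub1set HyK HIK' cardsU1 HyI /=; lia.
Qed.

Lemma Jhasse_sdist (I K : J le) : Jhasse I K -> sdist (sval I) (sval K) = 1.
Proof.
rewrite /Jhasse !Jcover_card => /orP [] /andP [HIK /eqP Hcard].
  by rewrite sdist_sub // Hcard; lia.
by rewrite sdistC sdist_sub // Hcard; lia.
Qed.

Lemma Jhasse_step (I K : J le) d : sdist (sval I) (sval K) = d.+1 ->
  exists L : J le, Jhasse I L && (sdist (sval L) (sval K) == d).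
Proof.
move=> Hd; case HKI: (sval K :\: sval I == set0).
- have [|y Hy HL] := ideal_delP (svalP I) (svalP K).
    by rewrite -card_gt0; move: Hd; rewrite /sdist (eqP HKI) cards0; lia.
  exists (Sub (sval I :\ y) HL); rewrite /= sdist_del1 // Hd eqxx andbT.
  move: Hy; rewrite inE => /andP [_ HyI].
  by rewrite /Jhasse !Jcover_card /= subD1set (cardsD1 y (sval I)) HyI eqxx orbT.
- have [|y Hy HL] := ideal_addP (svalP I) (svalP K); first by rewrite HKI.
  exists (Sub (y |: sval I) HL); rewrite /= sdist_add1 // Hd eqxx andbT.
  move: Hy; rewrite inE => /andP [HyI _].
  by rewrite /Jhasse !Jcover_card /= subsetUr cardsU1 HyI eqxx.
Qed.

Lemma ball_sdist k (I : J le) :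
  ball (@Jhasse _ le) k I = [set K | sdist (sval I) (sval K) <= k].
Proof.
elim: k => [|k IH] /=.
  apply/setP => K; rewrite !inE leqn0; apply/eqP/eqP => [-> | HIK].
    exact: sdistxx.
  exact: ideal_inj (esym (sdist_eq0 HIK)).
rewrite IH; apply/setP => K; rewrite !inE; apply/orP/idP.
  case=> [/leqW // | /existsP [L /andP [HL HLK]]].
  rewrite inE in HL; have := sdist_triangle (sval I) (sval L) (sval K).
  by rewrite (Jhasse_sdist HLK) addn1 => /leq_trans; apply.
case: (leqP (sdist (sval I) (sval K)) k) => [Hk _ | Hk Hk']; first by left.
have /Jhasse_step [L /andP [HKL /eqP HLI]] : sdist (sval K) (sval I) = k.+1.
  by rewrite sdistC; apply/anti_leq/andP; split.
right; apply/existsP; exists L; rewrite inE sdistC HLI leqnn /=.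
by rewrite /Jhasse orbC.
Qed.

Lemma sdist_levels (K : J le) d (I : J le) : sdist (sval I) (sval K) = d ->
  forall j, j <= d -> exists L : J le, sdist (sval L) (sval K) == j.
Proof.
elim: d I => [|d IH] I HI j Hj; first by exists I; rewrite HI; lia.
case: (ltngtP j d.+1) => [Hjd | | Ejd]; last by exists I; rewrite HI Ejd.
- have [L /andP [_ /eqP HL]] := Jhasse_step HI; exact: IH HL j Hjd.
- by rewrite ltnNge Hj.
Qed.

Lemma sdist_lt_card (I K : J le) : sdist (sval I) (sval K) < #|{: J le}|.
Proof.
set d := sdist _ _.
have level (j : 'I_d.+1) := sdist_levels (erefl d) (ltn_ord j).
have f_inj : injective (fun j => xchoose (level j)).
  move=> i j /(congr1 (fun L => sdist (sval L) (sval K))).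
  by rewrite (eqP (xchooseP (level i))) (eqP (xchooseP (level j))); apply: ord_inj.
by have := leq_card _ f_inj; rewrite card_ord.
Qed.

Lemma gdist_sdist (I K : J le) : gdist (@Jhasse _ le) I K = sdist (sval I) (sval K).
Proof.
rewrite /gdist (eq_find (a2 := fun k => sdist (sval I) (sval K) <= k)).
  exact: find_iota_leq (sdist_lt_card I K).
by move=> k; rewrite ball_sdist inE.
Qed.

Lemma dJ_sdist : dJ le = \sum_(I : J le) \sum_(K : J le) sdist (sval I) (sval K).
Proof. by apply: eq_bigr => I _; apply: eq_bigr => K _; apply: gdist_sdist. Qed.
End IdealDistance.

Definition absdiff (a b : nat) : nat := (a - b) + (b - a).

Lemma absdiffSS a b : absdiff a.+1 b.+1 = absdiff a b.
Proof. by rewrite /absdiff !subSS. Qed.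

Section InitialSegments.
Variable m : nat.

Definition seg (k : nat) : {set 'I_m} := [set x : 'I_m | x < k].

Lemma card_seg k : k <= m -> #|seg k| = k.
Proof.
move=> Hkm; rewrite -sum1_card (eq_bigl (fun i : 'I_m => i < k)) => [|i].
  by rewrite (big_ord_narrow Hkm) sum1_card card_ord.
by rewrite inE.
Qed.

Lemma seg_sub a b : a <= b -> seg a \subset seg b.
Proof. by move=> Hab; apply/subsetP => x; rewrite !inE => /leq_trans; apply. Qed.

Lemma sdist_seg a b : a <= m -> b <= m -> sdist (seg a) (seg b) = absdiff a b.
Proof.
rewrite /absdiff => Ha Hb; case: (leqP a b) => Hab.
  by rewrite sdist_sub ?seg_sub // !card_seg //; lia.
by rewrite sdistC sdist_sub ?seg_sub ?(ltnW Hab) // !card_seg //; lia.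
Qed.

Lemma downclosed_seg (I : {set 'I_m}) :
  (forall x y : 'I_m, x \in I -> y <= x -> y \in I) -> I = seg #|I|.
Proof.
move=> Hdown; apply/setP => x; rewrite inE; apply/idP/idP => [Hx | ].
  rewrite -(card_seg (ltn_ord x)); apply: subset_leq_card.
  by apply/subsetP => y; rewrite inE => Hyx; apply: Hdown Hx _.
apply: contraTT => Hx; rewrite -leqNgt -(card_seg (ltnW (ltn_ord x))).
apply: subset_leq_card; apply/subsetP => y Hy; rewrite inE ltnNge.
by apply: contra Hx; apply: Hdown.
Qed.
End InitialSegments.

Lemma sum_sym_recr M (F : 'I_M.+1 -> 'I_M.+1 -> nat) :
  (forall i j, F i j = F j i) ->
  let w := widen_ord (leqnSn M) in
  \sum_i \sum_j F i j = \sum_(i < M) \sum_(j < M) F (w i) (w j)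
    + 2 * \sum_(i < M) F (w i) ord_max + F ord_max ord_max.
Proof.
move=> FC w; rewrite big_ord_recr /=; under eq_bigr => i _ do rewrite big_ord_recr /=.
rewrite big_split /= big_ord_recr /=.
under [\sum_(j < M) F ord_max _]eq_bigr => j _ do rewrite FC.
by rewrite /w mul2n -addnn !addnA.
Qed.

Lemma sum_absdiff_last M : 2 * \sum_(i < M) absdiff i M = M * M.+1.
Proof.
elim: M => [|M IH]; first by rewrite big_ord0.
rewrite big_ord_recr /= (eq_bigr (fun i : 'I_M => absdiff i M + 1)) => [|i _]; last first.
  by rewrite /absdiff; have := ltn_ord i; lia.
by rewrite big_split /= sum1_card card_ord !mulnDr IH /absdiff; lia.
Qed.

Lemma sum_absdiff_sq M : 3 * \sum_(i < M) \sum_(j < M) absdiff i j = M.-1 * M * M.+1.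
Proof.
elim: M => [|M IH]; first by rewrite big_ord0.
rewrite sum_sym_recr /= => [|i j]; last by rewrite /absdiff addnC.
have := sum_absdiff_last M; rewrite !mulnDr IH.
by case: M {IH} => [|M] /=; nia.
Qed.

Lemma sum_absdiff_mid c :
  \sum_(a < (2 * c).+1) (absdiff a c + 2 * (a == c :> nat)) = c * c.+1 + 2.
Proof.
elim: c => [|c IH]; first by rewrite big_ord1.
have -> : (2 * c.+1).+1 = (2 * c).+3 by lia.
rewrite big_ord_recl /=; under eq_bigr => a _ do rewrite /bump /= add1n eqSS absdiffSS.
by rewrite big_ord_recr /= IH /absdiff; lia.
Qed.

Section DoubleTailedDiamond.
Variable n : nat.
Local Notation N := (2 * n + 2).
Local Notation seg := (@seg N).

Lemma Tn_rank_mono (x y : 'I_N) : Tn_le x y -> x != y -> Tn_rank x < Tn_rank y.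
Proof. by rewrite /Tn_le => /orP [/eqP -> | //]; rewrite eqxx. Qed.

Lemma Tn_le_index (x y : 'I_N) : Tn_le x y -> x <= y.
Proof. by rewrite /Tn_le => /orP [/eqP -> // |]; rewrite /Tn_rank; repeat case: ifP; lia. Qed.

Lemma Tn_incomparable (x y : 'I_N) : x < y -> ~~ Tn_le x y ->
  (x : nat) = n /\ (y : nat) = n.+1.
Proof. by rewrite /Tn_le negb_or => + /andP [_]; rewrite /Tn_rank; repeat case: ifP; lia. Qed.

Definition Qc : {set 'I_N} := [set x : 'I_N | (x < n) || ((x : nat) == n.+1)].

Lemma seg_ideal k : is_ideal (@Tn_le n) (seg k).
Proof. by apply/idealP => x y; rewrite !inE => Hy /Tn_le_index /leq_ltn_trans; apply. Qed.

Lemma Qc_ideal : is_ideal (@Tn_le n) Qc.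
Proof.
apply/idealP => x y; rewrite !inE /Tn_le => Hy /orP [/eqP -> // |].
by move: Hy; rewrite /Tn_rank; repeat case: ifP; lia.
Qed.

Lemma Tn_ideal_gap (I : {set 'I_N}) (x y : 'I_N) : is_ideal (@Tn_le n) I ->
  y \in I -> x \notin I -> x < y -> (x : nat) = n /\ (y : nat) = n.+1.
Proof.
move=> /idealP HI Hy Hx Hxy; apply: Tn_incomparable Hxy _.
by apply: contra Hx; apply: HI.
Qed.

Lemma Tn_ideals (I : {set 'I_N}) : is_ideal (@Tn_le n) I -> I = seg #|I| \/ I = Qc.
Proof.
move=> HI; have gap := Tn_ideal_gap HI.
case: (pickP (fun y => (y \notin I) && [exists x in I, y < x])) => [y | nogap].
  case/andP=> Hy /existsP [x /andP [Hx Hyx]]; right.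
  have [Ey Ex] := gap y x Hx Hy Hyx.
  apply/setP => z; rewrite inE; apply/idP/orP => [Hz | [Hzn | /eqP Ez]].
  - case: (ltngtP z n) => [Hzn | Hnz | Ezn]; first by left.
    + by right; apply/eqP; have [_ ->] := gap y z Hz Hy ltac:(lia).
    + by move: Hy; rewrite (_ : y = z) ?Hz //; apply: ord_inj; rewrite Ey Ezn.
  - by apply: contraT => Hz; have := gap z x Hx Hz ltac:(lia); lia.
  - by rewrite (_ : z = x) //; apply: ord_inj; rewrite Ex Ez.
left; apply: downclosed_seg => x y Hx Hyx.
case: (ltngtP y x) => [Hlt | Hgt | /ord_inj -> //]; last by rewrite leqNgt Hgt in Hyx.
have /negbT := nogap y; rewrite negb_and negbK => /orP [// | /existsPn /(_ x)].
by rewrite Hx Hlt.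
Qed.

(* Qc differs from the segment {a_1, ..., a_n, b} by exchanging b and c. *)
Lemma Qc_segU : Qc :|: seg n.+1 = seg n.+2.
Proof. by apply/setP => x; rewrite !inE; lia. Qed.

Lemma Qc_segI : Qc :&: seg n.+1 = seg n.
Proof. by apply/setP => x; rewrite !inE; lia. Qed.

Lemma card_Qc : #|Qc| = n.+1.
Proof. by have := cardsUI Qc (seg n.+1); rewrite Qc_segU Qc_segI !card_seg; lia. Qed.

(* Qc is not an initial segment: it contains c = n+1 but not b = n. *)
Lemma seg_neq_Qc k : seg k != Qc.
Proof.
have [Hb Hc] : n < N /\ n.+1 < N by lia.
by apply/eqP => /setP E; have := E (Ordinal Hb); have := E (Ordinal Hc); rewrite !inE /=; lia.
Qed.

Lemma sdist_Qc_seg a : a <= N ->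
  sdist Qc (seg a) = absdiff a n.+1 + 2 * (a == n.+1).
Proof.
rewrite /absdiff => HaN; case: (ltngtP a n.+1) => Ha.
- rewrite sdistC sdist_sub ?card_seg ?card_Qc //; first lia.
  by apply/subsetP => x; rewrite !inE; lia.
- rewrite sdist_sub ?card_seg ?card_Qc //; first lia.
  by apply/subsetP => x; rewrite !inE; lia.
- by rewrite Ha sdist_UI Qc_segU Qc_segI !card_seg; lia.
Qed.

Definition Rn_elem (i : 'I_N.+2) : J (@Tn_le n) :=
  if i < N.+1 then exist _ (seg i) (seg_ideal i) else exist _ Qc Qc_ideal.

Definition Rn_index (I : J (@Tn_le n)) : 'I_N.+2 :=
  if sval I == Qc then ord_max else inord #|sval I|.

Lemma Rn_elem_widen (i : 'I_N.+1) : sval (Rn_elem (widen_ord (leqnSn _) i)) = seg i.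
Proof. by rewrite /Rn_elem /= ltn_ord. Qed.

Lemma Rn_elem_max : sval (Rn_elem ord_max) = Qc.
Proof. by rewrite /Rn_elem /= ltnn. Qed.

(* Rn_index inverts Rn_elem; surjectivity is the classification Tn_ideals. *)
Lemma Rn_elem_bij : bijective Rn_elem.
Proof.
exists Rn_index => [i | I]; rewrite /Rn_index.
  case: (ltnP i N.+1) => Hi.
    rewrite (_ : i = widen_ord (leqnSn _) (Ordinal Hi)) ?Rn_elem_widen; last exact: ord_inj.
    by rewrite (negbTE (seg_neq_Qc _)) card_seg //; apply: ord_inj; rewrite /= inordK.
  rewrite (_ : i = ord_max) ?Rn_elem_max ?eqxx //; apply: ord_inj => /=.
  by have := ltn_ord i; lia.
case: eqP => [EQ | NQ]; first by apply: ideal_inj; rewrite Rn_elem_max EQ.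
case: (Tn_ideals (svalP I)) => EI; last by case: NQ.
have HI : #|sval I| < N.+1 by rewrite ltnS -[leqRHS](card_ord N) max_card.
rewrite /Rn_elem inordK; last exact: ltnW.
by rewrite HI; apply: ideal_inj; rewrite /= -EI.
Qed.

(* d(R_n) as a sum over segments: the block of segment pairs plus twice the
   row of Qc (Qc is at distance 0 from itself). *)
Lemma dRn_sum : dRn n = \sum_(i < N.+1) \sum_(j < N.+1) absdiff i j
  + 2 * \sum_(a < N.+1) (absdiff a n.+1 + 2 * (a == n.+1 :> nat)).
Proof.
rewrite /dRn (dJ_sdist Tn_rank_mono) (reindex _ (onW_bij _ Rn_elem_bij)).
under eq_bigr => i _ do rewrite (reindex _ (onW_bij _ Rn_elem_bij)).
rewrite sum_sym_recr => [|i j]; last exact: sdistC.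
rewrite Rn_elem_max sdistxx addn0; congr (_ + 2 * _).
  apply: eq_bigr => i _; apply: eq_bigr => j _.
  by rewrite !Rn_elem_widen sdist_seg // -ltnS.
by apply: eq_bigr => a _; rewrite Rn_elem_widen sdistC sdist_Qc_seg // -ltnS.
Qed.
End DoubleTailedDiamond.

Import GRing.Theory.
Local Open Scope ring_scope.

Theorem theorem1p8 (n : nat) :
  (dRn n)%:R = (2%:R / 3%:R) * (n.+3)%:R * (4 * n ^ 2 + 9 * n + 8)%:R :> rat.
Proof.
have dRn3 : (3 * dRn n = 2 * n.+3 * (4 * n ^ 2 + 9 * n + 8))%N.
  rewrite dRn_sum (_ : (2 * n + 2 = 2 * n.+1)%N); last lia.
  by rewrite mulnDr sum_absdiff_sq sum_absdiff_mid /=; nia.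
apply: (@mulfI _ 3%:R) => //; rewrite -natrM dRn3.
by rewrite !natrM !natrD !natrM ?natrX; field.
Qed.
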